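(* Let $n\ge2$ and let $g_1,\dots,g_r\in\mathbb R[X_1,\dots,X_n]$ satisfy $1-\|\mathbf X\|_2^2\in\mathcal Q(\mathbf g)$ and $\|g_i\|\le\tfrac12$ for all $i$. Let $\mathfrak c\ge1,\textit{Ł}\ge1$ satisfy $D(x)^{\textit{Ł}}\le\mathfrak c\,G(x)$ on $[-1,1]^n$, let $\gamma(n,\mathbf g)\ge1$ be a constant depending only on $n,\mathbf g$ such that every $h$ with $\min_S h>0$ lies in $\mathcal Q_\ell(\mathbf g)$ whenever $\ell\ge\gamma(n,\mathbf g)\,d(h)^{3.5n\textit{Ł}}\epsilon(h)^{-2.5n\textit{Ł}}$, and put $\gamma'(n,\mathbf g)=3^{2.5n\textit{Ł}}\gamma(n,\mathbf g)$. Let $f\in\mathbb R[\mathbf X]$ with $f\ge0$ on $S$, $f^*=\min_Sf$, and $0<\epsilon\le\|f\|$. Then $f^*-f^*_{\mathrm{SoS},\ell}\le\epsilon$ for every $$\ell\ge\gamma'(n,\mathbf g)\,d(f)^{3.5n\textit{Ł}}\,\|f\|^{2.5n\textit{Ł}}\,\epsilon^{-2.5n\textit{Ł}}.$$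
   Context: $\Sigma^2$ sums of squares; $S=\{x:g_i(x)\ge0\ \forall i\}$ (nonempty); $\mathcal Q(\mathbf g)=\Sigma^2+\sum_i\Sigma^2g_i$; $\mathcal Q_\ell(\mathbf g)=\{s_0+\sum_is_ig_i: s_j\in\Sigma^2,\deg s_0\le\ell,\deg(s_ig_i)\le\ell\}$; $\|h\|=\max_{[-1,1]^n}|h|$; $d(h)=\deg h$; $\epsilon(h)=\min_Sh/\|h\|$; $G(x)=|\min\{g_1(x),\dots,g_r(x),0\}|$, $D(x)=\operatorname{dist}(x,S)$. The SoS relaxation value of order $\ell$ is $f^*_{\mathrm{SoS},\ell}=\sup\{\lambda\in\mathbb R: f-\lambda\in\mathcal Q_{2\ell}(\mathbf g)\}$. *)

From HB Require Import structures.
From mathcomp Require Import all_boot all_order all_algebra.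
From mathcomp Require Import boolp classical_sets reals exp.
From mathcomp Require Import mpoly.
Set Implicit Arguments. Unset Strict Implicit. Unset Printing Implicit Defensive.
Import Order.TTheory GRing.Theory Num.Theory.
Local Open Scope ring_scope.
Local Open Scope classical_set_scope.

Section Defs.
Variables (R : realType) (n : nat).
Notation poly := {mpoly R[n]}.

Definition cube : set ('I_n -> R) := [set x | forall i, -1 <= x i <= 1].

Definition supnorm (h : poly) : R := sup [set `|h.@[x]| | x in cube].

(* d(h) = total degree (msize p = 1 + degree) *)
Definition deg (h : poly) : nat := (msize h).-1.

Definition is_sos (p : poly) : Prop :=
  exists s : seq poly, p = \sum_(q <- s) q ^+ 2.

Variables (r : nat) (g : 'I_r -> poly).

Definition semialg : set ('I_n -> R) := [set x | forall i, 0 <= (g i).@[x]].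

Definition inQ (p : poly) : Prop :=
  exists (s0 : poly) (s : 'I_r -> poly),
    [/\ is_sos s0, (forall i, is_sos (s i)) & p = s0 + \sum_(i < r) s i * g i].

(* truncated quadratic module Q_l(g): deg s0 <= l, deg (s_i g_i) <= l *)
Definition inQl (l : nat) (p : poly) : Prop :=
  exists (s0 : poly) (s : 'I_r -> poly),
    [/\ is_sos s0, (forall i, is_sos (s i)),
        (msize s0 <= l.+1)%N, (forall i, (msize (s i * g i) <= l.+1)%N)
      & p = s0 + \sum_(i < r) s i * g i].

Definition minS (h : poly) : R := inf [set h.@[x] | x in semialg].

Definition epsh (h : poly) : R := minS h / supnorm h.

Definition Gfun (x : 'I_n -> R) : R := `| \big[Num.min/0]_(i < r) (g i).@[x] |.

Definition Dfun (x : 'I_n -> R) : R :=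
  inf [set Num.sqrt (\sum_(i < n) (x i - y i) ^+ 2) | y in semialg].

Definition fsos (f : poly) (l : nat) : R :=
  sup [set lam : R | inQl (2 * l) (f - lam%:MP)].

End Defs.

From HB Require Import structures.
From mathcomp Require Import all_boot all_order all_algebra.
From mathcomp Require Import boolp classical_sets reals exp.
From mathcomp Require Import mpoly.
From mathcomp Require Import ring lra zify.
Set Implicit Arguments. Unset Strict Implicit. Unset Printing Implicit Defensive.
Import Order.TTheory GRing.Theory Num.Theory.
Local Open Scope ring_scope.
Local Open Scope classical_set_scope.

(* Shifting [f] down by [f* - eps] gives [h] with [min_S h >= eps], [||h|| <= 3 ||f||]
   and [d(h) <= d(f)], hence [eps(h) >= eps / (3 ||f||)].  The assumed degree bound
   for positivity certificates then puts [h] in [Q_(2 l)], i.e. [f* - eps] is a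
   feasible value of the order-[l] SoS relaxation.  The hypotheses on [n], [||g_i||],
   [c] and the Lojasiewicz inequality only serve, in the paper, to produce [gamma]. *)

Section Supnorm.
Variables (R : realType) (n : nat).
Implicit Types (p : {mpoly R[n]}) (x : 'I_n -> R).

Lemma norm_meval_le_sum_coef p x :
  cube x -> `|p.@[x]| <= \sum_(m <- msupp p) `|p@_m|.
Proof.
move=> cx; rewrite mevalE; apply: (le_trans (ler_norm_sum _ _ _)).
apply: ler_sum => m _; rewrite normrM ler_piMr // normr_prod.
apply: prodr_ile1 => i _; rewrite normrX exprn_ge0 //=.
by apply: exprn_ile1 => //; rewrite ler_norml; exact: cx.
Qed.

Lemma meval_le_supnorm p x : cube x -> `|p.@[x]| <= supnorm p.
Proof.
move=> cx; apply: ub_le_sup; last by exists x.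
by exists (\sum_(m <- msupp p) `|p@_m|) => _ [y cy <-]; exact: norm_meval_le_sum_coef.
Qed.

Lemma supnorm_le p B : (forall x, cube x -> `|p.@[x]| <= B) -> supnorm p <= B.
Proof.
move=> hB; apply: ge_sup; last by move=> _ [x cx <-]; exact: hB.
have c0 : cube (fun _ : 'I_n => 0 : R) by move=> i /=; lra.
by exists `|p.@[fun=> 0]|, (fun=> 0).
Qed.

End Supnorm.

Lemma deg_subC (R : realType) n (p : {mpoly R[n]}) c :
  (deg (p - c%:MP) <= deg p)%N.
Proof.
have := msizeD_le p (- c%:MP); rewrite msizeN msizeC /deg.
by case: (c != 0) => /=; lia.
Qed.

Lemma is_sos_meval_ge0 (R : realType) n (p : {mpoly R[n]}) x :
  is_sos p -> 0 <= p.@[x].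
Proof.
move=> [s ->]; rewrite rmorph_sum; apply: sumr_ge0 => q _.
by rewrite rmorphXn sqr_ge0.
Qed.

Section QuadraticModule.
Variables (R : realType) (n r : nat) (g : 'I_r -> {mpoly R[n]}).
Implicit Types (p h f : {mpoly R[n]}) (x : 'I_n -> R).

Lemma inQ_meval_ge0 p x : inQ g p -> semialg g x -> 0 <= p.@[x].
Proof.
move=> [s0 [s [s0_sos s_sos ->]]] Sx; rewrite mevalD rmorph_sum.
apply: addr_ge0; first exact: is_sos_meval_ge0.
apply: sumr_ge0 => i _; rewrite rmorphM.
by apply: mulr_ge0; [exact: is_sos_meval_ge0 | exact: Sx].
Qed.

Lemma inQl_inQ l p : inQl g l p -> inQ g p.
Proof. by move=> [s0 [s [? ? _ _ ->]]]; exists s0, s. Qed.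

Lemma semialg_sub_cube :
  inQ g (1 - \sum_(i < n) 'X_i ^+ 2) -> semialg g `<=` @cube R n.
Proof.
move=> ball x Sx i; have := inQ_meval_ge0 ball Sx.
rewrite mevalB meval1 rmorph_sum.
under eq_bigr do rewrite rmorphXn /= mevalXU.
have : x i ^+ 2 <= \sum_(j < n) x j ^+ 2.
  by rewrite (bigD1 i) //= lerDl; apply: sumr_ge0 => j _; exact: sqr_ge0.
by rewrite expr2 => ? ?; apply/andP; split; nra.
Qed.

Lemma le_minS h B :
  semialg g !=set0 -> (forall x, semialg g x -> B <= h.@[x]) -> B <= minS g h.
Proof.
move=> [x0 Sx0] hB; apply: lb_le_inf; first by exists h.@[x0], x0.
by move=> _ [x Sx <-]; exact: hB.
Qed.

Lemma minS_le_meval h B x :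
  (forall y, semialg g y -> B <= h.@[y]) -> semialg g x -> minS g h <= h.@[x].
Proof.
move=> hB Sx; apply: ge_inf; last by exists x.
by exists B => _ [y Sy <-]; exact: hB.
Qed.

Lemma le_fsos f l lam x0 :
  semialg g x0 -> inQl g (2 * l) (f - lam%:MP) -> lam <= fsos g f l.
Proof.
move=> Sx0 flam; apply: ub_le_sup => //; exists f.@[x0] => mu fmu.
by have := inQ_meval_ge0 (inQl_inQ fmu) Sx0; rewrite mevalB mevalC subr_ge0.
Qed.

Section Shift.
Variables (f : {mpoly R[n]}) (eps : R) (x0 : 'I_n -> R).
Hypotheses (f_ge0 : forall x, semialg g x -> 0 <= f.@[x]) (Sx0 : semialg g x0).
Hypotheses (ball : inQ g (1 - \sum_(i < n) 'X_i ^+ 2)).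
Hypotheses (eps_gt0 : 0 < eps) (eps_le : eps <= supnorm f).

Let fstar := minS g f.
Let h := f - (fstar - eps)%:MP.

Let meval_h x : h.@[x] = f.@[x] - fstar + eps.
Proof. by rewrite mevalB mevalC; ring. Qed.

Let fstar_le x : semialg g x -> fstar <= f.@[x].
Proof. exact: minS_le_meval f_ge0. Qed.

Lemma minS_shift : eps <= minS g h.
Proof.
apply: le_minS; first by exists x0.
by move=> x Sx; rewrite meval_h; have := fstar_le Sx; lra.
Qed.

Lemma supnorm_shift : supnorm h <= 3 * supnorm f.
Proof.
have e_gt0 := eps_gt0; have e_le := eps_le.
have fstar_ge0 : 0 <= fstar by apply: le_minS => //; exists x0.
have fstar_le_sup : fstar <= supnorm f.
  apply: (le_trans (fstar_le Sx0)); apply: (le_trans (ler_norm _)).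
  exact/meval_le_supnorm/semialg_sub_cube.
apply: supnorm_le => x cx; rewrite meval_h.
have := meval_le_supnorm f cx; rewrite !ler_norml => /andP[? ?].
by apply/andP; split; lra.
Qed.

Lemma epsh_shift : eps <= epsh g h * (3 * supnorm f).
Proof.
have hmin := minS_shift.
have eps_le_h : eps <= supnorm h.
  apply: le_trans (meval_le_supnorm h (semialg_sub_cube ball Sx0)).
  rewrite meval_h (le_trans _ (ler_norm _)) //.
  by have := fstar_le Sx0; lra.
have h_gt0 : 0 < supnorm h by apply: lt_le_trans eps_le_h.
have minS_ge0 : 0 <= minS g h by apply: le_trans hmin; exact: ltW.
rewrite /epsh mulrAC -mulrA; apply: (le_trans hmin); rewrite ler_peMr //.
by rewrite ler_pdivlMr // mul1r supnorm_shift.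
Qed.

Lemma deg_shift : (deg h <= deg f)%N.
Proof. exact: deg_subC. Qed.

End Shift.
End QuadraticModule.

Lemma powRN_le_mul (R : realType) (a x y z : R) :
  0 <= a -> 0 <= y -> 0 < z -> z <= x * y ->
  powR x (- a) <= powR y a * powR z (- a).
Proof.
move=> a0 y0 z0 zxy; rewrite !powRN.
have x0 : 0 < x by nra.
have za : powR z a <= powR x a * powR y a.
  rewrite -powRM //; last exact: ltW.
  by apply: (ge0_ler_powR a0); rewrite // nnegrE ?mulr_ge0 // ltW.
have xa := powR_gt0 a x0; have zpa := powR_gt0 a z0.
by rewrite ler_pdivlMr // ler_pdivrMl.
Qed.

Theorem mainTheorem5 (R : realType) (n : nat) (hn : (2 <= n)%N)
  (r : nat) (g : 'I_r -> {mpoly R[n]})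
  (hS : semialg g !=set0)
  (hball : inQ g (1 - \sum_(i < n) 'X_i ^+ 2))
  (hg : forall i, supnorm (g i) <= 1 / 2)
  (c L : R) (hc : 1 <= c) (hL : 1 <= L)
  (hDG : forall x, cube x -> powR (Dfun g x) L <= c * Gfun g x)
  (gamma : R) (hgamma1 : 1 <= gamma)
  (hgamma : forall (h : {mpoly R[n]}) (l : nat), 0 < minS g h ->
     gamma * powR (deg h)%:R (7 / 2 * n%:R * L)
           * powR (epsh g h) (- (5 / 2 * n%:R * L)) <= l%:R ->
     inQl g l h)
  (f : {mpoly R[n]}) (hf : forall x, semialg g x -> 0 <= f.@[x])
  (eps : R) (heps : 0 < eps) (hepsf : eps <= supnorm f) :
  forall l : nat,
    powR 3 (5 / 2 * n%:R * L) * gamma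
      * powR (deg f)%:R (7 / 2 * n%:R * L)
      * powR (supnorm f) (5 / 2 * n%:R * L)
      * powR eps (- (5 / 2 * n%:R * L)) <= l%:R ->
    minS g f - fsos g f l <= eps.
Proof.
move=> l hl; case: hS => x0 Sx0.
set a := 5 / 2 * n%:R * L in hl hgamma *; set b := 7 / 2 * n%:R * L in hl hgamma *.
have a_ge0 : 0 <= a by rewrite !mulr_ge0 ?ler0n //; lra.
have b_ge0 : 0 <= b by rewrite !mulr_ge0 ?ler0n //; lra.
have F_ge0 : 0 <= supnorm f by apply: le_trans hepsf; exact: ltW.
set h := f - (minS g f - eps)%:MP.
have deg_pow : powR (deg h)%:R b <= powR (deg f)%:R b.
  by apply: (ge0_ler_powR b_ge0); rewrite ?nnegrE ?ler0n // ler_nat deg_shift.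
have epsh_pow : powR (epsh g h) (- a) <= powR 3 a * powR (supnorm f) a * powR eps (- a).
  rewrite -powRM //; apply: powRN_le_mul => //; first exact: mulr_ge0.
  exact: epsh_shift.
have h_in : inQl g (2 * l) h.
  apply: hgamma; first exact: lt_le_trans heps (minS_shift eps hf Sx0).
  apply: (le_trans _ (_ : l%:R <= (2 * l)%:R)); last by rewrite ler_nat leq_pmull.
  apply: le_trans hl.
  have -> : powR 3 a * gamma * powR (deg f)%:R b * powR (supnorm f) a * powR eps (- a)
    = gamma * powR (deg f)%:R b * (powR 3 a * powR (supnorm f) a * powR eps (- a)).
    by ring.
  by rewrite ler_pM ?mulr_ge0 ?powR_ge0 ?ler_wpM2l //; lra.
have := le_fsos Sx0 h_in; lra.
Qed.
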